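(* In the iPALM setting described in the context, let $\varepsilon\in(0,1)$, $\beta_0>0$, $\rho_0>0$, $\sigma>1$, and choose $\beta_k=\beta_0\sigma^k$, $\rho_k=\rho_0\sigma^{-k}$, and $\bar\varepsilon_k=\min\{\bar\varepsilon,\sqrt{\rho_0/(20\sigma)}\,\sigma^{-k}\}$ for all $k\ge0$, where $\bar\varepsilon=\frac{\varepsilon(\sigma-1)}{8(\sigma+1)}\min\{1,\sqrt{\beta_0\rho_0}\}$. Let $D_0=\sqrt{\beta_0\rho_0\|x^{(0)}-x^*\|^2+\|\lambda^{(0)}-\lambda^*\|^2}$ and $$K=\max\Big\{\Big\lceil\log_\sigma\tfrac{4D_0\sqrt{\rho_0}}{\sqrt{\beta_0}\varepsilon}\Big\rceil,\Big\lceil\log_\sigma\tfrac{4D_0}{\beta_0\varepsilon}\Big\rceil,\Big\lceil\log_\sigma\tfrac{5(D_0+\|\lambda^*\|)^2}{\beta_0\varepsilon}\Big\rceil,\Big\lceil2\log_\sigma\tfrac{8}{\varepsilon(\log\sigma)^2}\Big\rceil-1\Big\}+1.$$ Then $x^{(K)}$ is an $\varepsilon$-KKT solution of the problem with multiplier $\lambda^{(K)}$, i.e. $\mathrm{dist}(0,\partial G(x^{(K)})+A^\top\lambda^{(K)})\le\varepsilon$, $\sqrt{\|A_Ex^{(K)}-b_E\|^2+\|[A_Ix^{(K)}-b_I]_+\|^2}\le\varepsilon$, $\lambda_I^{(K)}\ge0$, and $\|\lambda_I^{(K)}\odot(A_Ix^{(K)}-b_I)\|\le\varepsilon$.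
   Context: iPALM setting. Consider $\min_x G(x):=f(x)+r(x)$ subject to $A_Ex=b_E$, $A_Ix\le b_I$, where $f:\mathbb R^n\to\mathbb R$ is convex, differentiable with $L_f$-Lipschitz gradient and $\mu$-strongly convex ($\mu\ge0$), and $r$ is proper closed convex. Write $A=[A_E;A_I]$, $b=[b_E;b_I]$, and multipliers $\lambda=[\lambda_E;\lambda_I]$. Assume $(x^*,\lambda^* )$ satisfies the KKT conditions $0\in\partial G(x^* )+A^\top\lambda^*$, $A_Ex^*=b_E$, $A_Ix^*\le b_I$, $\lambda_I^*\ge0$, $\langle\lambda_I^*,A_Ix^*-b_I\rangle=0$. The augmented Lagrangian is $\mathcal L_\beta(x,\lambda)=G(x)+\langle\lambda_E,A_Ex-b_E\rangle+\frac\beta2\|A_Ex-b_E\|^2+\frac1{2\beta}\big(\|[\beta(A_Ix-b_I)+\lambda_I]_+\|^2-\|\lambda_I\|^2\big)$, with $[\cdot]_+$ the componentwise positive part. Given $x^{(0)}\in\mathrm{dom}(G)$, $\lambda^{(0)}$, and positive numbers $\beta_k,\rho_k$ and $\bar\varepsilon_k\ge0$, the iPALM iterates satisfy for each $k\ge0$: with $\Psi_k(x)=\mathcal L_{\beta_k}(x,\lambda^{(k)})+\frac{\rho_k}2\|x-x^{(k)}\|^2$, the point $x^{(k+1)}$ is any point with $\mathrm{dist}(0,\partial\Psi_k(x^{(k+1)}))\le\bar\varepsilon_k$, and $\lambda_E^{(k+1)}=\lambda_E^{(k)}+\beta_k(A_Ex^{(k+1)}-b_E)$, $\lambda_I^{(k+1)}=[\lambda_I^{(k)}+\beta_k(A_Ix^{(k+1)}-b_I)]_+$.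 $\partial$ is the convex subdifferential and $\mathrm{dist}(0,S)=\inf_{s\in S}\|s\|$. $\odot$ is the componentwise product; $\log$ is the natural logarithm. *)

From HB Require Import structures.
From mathcomp Require Import all_boot all_order all_algebra.
From mathcomp Require Import all_classical all_reals all_analysis.
Set Implicit Arguments. Unset Strict Implicit. Unset Printing Implicit Defensive.
Import Order.TTheory GRing.Theory Num.Theory.
Local Open Scope classical_set_scope.
Local Open Scope ring_scope.

Section Defs.
Variable R : realType.

Definition vdot {n : nat} (u v : 'cV[R]_n) : R := \sum_(i < n) u i 0 * v i 0.
Definition vnorm {n : nat} (u : 'cV[R]_n) : R := Num.sqrt (vdot u u).

Definition ppart {m : nat} (u : 'cV[R]_m) : 'cV[R]_m := \col_i Num.max (u i 0) 0.
Definition hadamard {m : nat} (u v : 'cV[R]_m) : 'cV[R]_m := \col_i (u i 0 * v i 0).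

Definition has_gradient {n : nat} (f : 'cV[R]_n -> R) (g : 'cV[R]_n -> 'cV[R]_n) :=
  forall x (e : R), 0 < e -> exists2 d : R, 0 < d & forall y,
    vnorm (y - x) < d -> `|f y - f x - vdot (g x) (y - x)| <= e * vnorm (y - x).

Definition lipschitz_map {n : nat} (L : R) (g : 'cV[R]_n -> 'cV[R]_n) :=
  forall x y, vnorm (g x - g y) <= L * vnorm (x - y).

Definition convex_fun {n : nat} (f : 'cV[R]_n -> R) :=
  forall x y (t : R), 0 <= t <= 1 ->
    f (t *: x + (1 - t) *: y) <= t * f x + (1 - t) * f y.

Definition strongly_convex {n : nat} (mu : R) (f : 'cV[R]_n -> R) :=
  forall x y (t : R), 0 <= t <= 1 ->
    f (t *: x + (1 - t) *: y) <=
      t * f x + (1 - t) * f y - mu / 2 * t * (1 - t) * vnorm (x - y) ^+ 2.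

Definition proper_fun {n : nat} (r : 'cV[R]_n -> \bar R) :=
  (forall x, r x != -oo%E) /\ exists x, r x \is a fin_num.

Definition convex_efun {n : nat} (r : 'cV[R]_n -> \bar R) :=
  forall x y : 'cV[R]_n, forall t : R, 0 < t < 1 ->
    (r (t *: x + (1 - t) *: y)%R <= (t%:E * r x) + ((1 - t)%:E * r y))%E.

(* closed = lower semicontinuous *)
Definition lsc_fun {n : nat} (r : 'cV[R]_n -> \bar R) :=
  forall x (t : R), (t%:E < r x)%E -> exists2 d : R, 0 < d &
    forall y, vnorm (y - x) < d -> (t%:E < r y)%E.

(* convex subdifferential (empty outside the domain) *)
Definition subdiff {n : nat} (h : 'cV[R]_n -> \bar R) (x : 'cV[R]_n) : set 'cV[R]_n :=
  [set g | h x \is a fin_num /\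
           forall y, (h x + (vdot g (y - x))%:E <= h y)%E].

(* dist(0, S) = inf_{s in S} ||s||  (+oo if S is empty) *)
Definition dist0 {n : nat} (S : set 'cV[R]_n) : \bar R :=
  ereal_inf [set (vnorm s)%:E | s in S].

Definition aug_lag {n mE mI : nat} (AE : 'M[R]_(mE, n)) (bE : 'cV[R]_mE)
  (AI : 'M[R]_(mI, n)) (bI : 'cV[R]_mI) (G : 'cV[R]_n -> \bar R) (beta : R)
  (x : 'cV[R]_n) (lamE : 'cV[R]_mE) (lamI : 'cV[R]_mI) : \bar R :=
  (G x + (vdot lamE (AE *m x - bE) + beta / 2 * vnorm (AE *m x - bE) ^+ 2
     + (2 * beta)^-1 * (vnorm (ppart (beta *: (AI *m x - bI) + lamI)) ^+ 2
                        - vnorm lamI ^+ 2))%:E)%E.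

Definition logb (sigma a : R) : R := ln a / ln sigma.

(* ceil(log_sigma a), with the convention that it is -oo (hence dropped from
   the max) when a <= 0; represented by falling back to the default value dflt *)
Definition ceil_log_or (sigma a : R) (dflt : int) : int :=
  if 0 < a then Num.ceil (logb sigma a) else dflt.

Definition K_int (eps beta0 rho0 sigma D0 nlamstar : R) : int :=
  let t4 := Num.ceil (2 * logb sigma (8 / (eps * (ln sigma) ^+ 2))) - 1 in
  Num.max (Num.max (Num.max
    (ceil_log_or sigma (4 * D0 * Num.sqrt rho0 / (Num.sqrt beta0 * eps)) t4)
    (ceil_log_or sigma (4 * D0 / (beta0 * eps)) t4))
    (ceil_log_or sigma (5 * (D0 + nlamstar) ^+ 2 / (beta0 * eps)) t4))
    t4 + 1.

Definition K_nat (eps beta0 rho0 sigma D0 nlamstar : R) : nat :=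
  absz (Num.max (K_int eps beta0 rho0 sigma D0 nlamstar) 1).

End Defs.

(* Measure the distance of the iterate [(x_k, lambda_k)] to the KKT pair by
   [D_k = sqrt (c |x_k - x*|^2 + |lambda_k - lambda*|^2)], where [c = beta_k rho_k = beta0 rho0]
   is constant along the schedule.  Monotonicity of [subdiff G] between [x_(k+1)] and [x*], the
   exact update of [lambda_E] and firm nonexpansiveness of [[.]_+] for [lambda_I] turn one
   inexact step into [D_(k+1)^2 + L_k^2 <= D_k^2 + 2 a_k D_(k+1)], where [L_k] is the same
   weighted length of the step and [a_k] is the scaled subproblem tolerance.  Hence [D_k] and
   [L_k] stay below [D_0 + 2 (a_0 + ... + a_k)].  At [x_(k+1)] the stationarity residual is at
   most the tolerance plus [rho_k L_k / sqrt c], the feasibility residual at most [L_k / beta_k]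
   and the complementarity residual at most [(D_(k+1) + |lambda*|) L_k / beta_k].  The two
   branches of the tolerance [epsbar_k] make [a_0 + ... + a_k] grow like a small multiple of
   [sigma^k] and at most linearly in [k]; the four logarithms in [K] are then exactly what makes
   each residual at most [eps]. *)

From mathcomp Require Import all_boot all_order all_algebra.
From mathcomp Require Import all_classical all_reals all_analysis.
From mathcomp Require Import lra ring.
Import Order.TTheory GRing.Theory Num.Theory.
Local Open Scope classical_set_scope.
Local Open Scope ring_scope.

Section InnerProduct.
Context {R : realType} {k : nat}.
Implicit Types (u v w : 'cV[R]_k) (a : R).

Lemma vdotC u v : vdot u v = vdot v u.
Proof. by apply: eq_bigr => i _; rewrite mulrC. Qed.

Lemma vdotDl u w v : vdot (u + w) v = vdot u v + vdot w v.
Proof. by rewrite /vdot -big_split; apply: eq_bigr => i _; rewrite !mxE mulrDl. Qed.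

Lemma vdotNl u v : vdot (- u) v = - vdot u v.
Proof. by rewrite /vdot -sumrN; apply: eq_bigr => i _; rewrite !mxE mulNr. Qed.

Lemma vdotZl a u v : vdot (a *: u) v = a * vdot u v.
Proof. by rewrite /vdot mulr_sumr; apply: eq_bigr => i _; rewrite !mxE mulrA. Qed.

Lemma vdotBl u w v : vdot (u - w) v = vdot u v - vdot w v.
Proof. by rewrite vdotDl vdotNl. Qed.

Lemma vdotDr u w v : vdot v (u + w) = vdot v u + vdot v w.
Proof. by rewrite !(vdotC v) vdotDl. Qed.

Lemma vdotNr u v : vdot v (- u) = - vdot v u.
Proof. by rewrite !(vdotC v) vdotNl. Qed.

Lemma vdotZr a u v : vdot v (a *: u) = a * vdot v u.
Proof. by rewrite !(vdotC v) vdotZl. Qed.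

Lemma vdotBr u w v : vdot v (u - w) = vdot v u - vdot v w.
Proof. by rewrite vdotDr vdotNr. Qed.

Lemma vdot_trmx l (A : 'M[R]_(k, l)) u (v : 'cV[R]_l) :
  vdot (A^T *m u) v = vdot u (A *m v).
Proof.
have vdotE m (p q : 'cV[R]_m) : vdot p q = (p^T *m q) 0 0.
  by rewrite !mxE; apply: eq_bigr => i _; rewrite !mxE.
by rewrite !vdotE trmx_mul trmxK mulmxA.
Qed.

Lemma vdot_ge0 u : 0 <= vdot u u.
Proof. by apply: sumr_ge0 => i _; rewrite -expr2 sqr_ge0. Qed.

Lemma vdot_eq0 u : vdot u u = 0 -> u = 0.
Proof.
move=> u0; apply/matrixP => i j; rewrite ord1 mxE.
have /eqP : u i 0 * u i 0 = 0.
  by apply: (psumr_eq0P (P := predT) (F := fun i => u i 0 * u i 0)) => // ? _;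
    rewrite -expr2 sqr_ge0.
by rewrite mulf_eq0 orbb => /eqP.
Qed.

Lemma vnorm_sqr u : vnorm u ^+ 2 = vdot u u.
Proof. by rewrite sqr_sqrtr // vdot_ge0. Qed.

Lemma vnorm_ge0 u : 0 <= vnorm u.
Proof. exact: sqrtr_ge0. Qed.

Lemma cauchy_schwarz_sqr u v : vdot u v ^+ 2 <= vdot u u * vdot v v.
Proof.
set a := vdot v v; set b := vdot u v.
have := vdot_ge0 (a *: u - b *: v).
rewrite vdotBl !vdotBr !vdotZl !vdotZr (vdotC v u) -/a -/b => h.
have [a_gt0 | a_le0] := ltrP 0 a.
  have : 0 <= a * (a * vdot u u - b ^+ 2) by rewrite mulrBr; nra.
  by rewrite pmulr_rge0 // subr_ge0 mulrC.
have v0 : v = 0 by apply: vdot_eq0; apply/eqP; rewrite eq_le a_le0 vdot_ge0.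
have b0 : b = 0 by rewrite /b v0 /vdot big1 // => i _; rewrite mxE mulr0.
by rewrite /a b0 expr2 mul0r mulr_ge0 ?vdot_ge0.
Qed.

Lemma vdot_le_vnorm u v : vdot u v <= vnorm u * vnorm v.
Proof.
apply: le_trans (ler_norm _) _.
rewrite -[leRHS]ger0_norm ?mulr_ge0 ?vnorm_ge0 //.
rewrite -ler_sqr ?nnegrE ?normr_ge0 // !real_normK ?num_real // exprMn !vnorm_sqr.
exact: cauchy_schwarz_sqr.
Qed.

Lemma vnormD u v : vnorm (u + v) <= vnorm u + vnorm v.
Proof.
rewrite -ler_sqr ?nnegrE ?addr_ge0 ?vnorm_ge0 // vnorm_sqr vdotDl !vdotDr sqrrD.
by rewrite !vnorm_sqr (vdotC v u); have := vdot_le_vnorm u v; lra.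
Qed.

Lemma vnormN u : vnorm (- u) = vnorm u.
Proof. by rewrite /vnorm vdotNl vdotNr opprK. Qed.

Lemma vnormB u v : vnorm (u - v) <= vnorm u + vnorm v.
Proof. by rewrite -(vnormN v) vnormD. Qed.

Lemma vnormZ a u : vnorm (a *: u) = `|a| * vnorm u.
Proof. by rewrite /vnorm vdotZl vdotZr mulrA -expr2 sqrtrM ?sqr_ge0 // sqrtr_sqr. Qed.

Lemma vdot_three_point u v w :
  2 * vdot (u - v) (u - w) = vdot (u - w) (u - w) + vdot (u - v) (u - v) - vdot (v - w) (v - w).
Proof.
have -> : v - w = (u - w) - (u - v) by rewrite opprB [RHS]addrC addrA subrK.
move: (u - w) (u - v) => p q.
by rewrite vdotBl !vdotBr (vdotC q p); ring.
Qed.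

End InnerProduct.

Lemma le_of_le_add_small {R : realFieldType} (a b Q : R) :
  (forall t : R, 0 < t < 1 -> a <= b + t * Q) -> a <= b.
Proof.
move=> h; apply/ler_addgt0Pr => e e_gt0.
have Q1_gt0 : 0 < `|Q| + 1 by rewrite ltr_wpDl.
set t := Num.min 2^-1 (e / (`|Q| + 1)).
have t_gt0 : 0 < t by rewrite lt_min invr_gt0 ltr0n divr_gt0.
have t_lt1 : t < 1 by rewrite gt_min invf_lt1 ?ltr1n.
have tQ : t * (`|Q| + 1) <= e by rewrite -ler_pdivlMr // ge_min lexx orbT.
have := h t; rewrite t_gt0 t_lt1 => /(_ isT).
have : t * Q <= t * `|Q| by rewrite ler_pM2l // ler_norm.
nra.
Qed.

Section Subdifferential.
Context {R : realType} {n : nat}.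
Implicit Types (x y s d : 'cV[R]_n).

Lemma subdiff_monotone {G : 'cV[R]_n -> \bar R} {x y gx gy} :
  gx \in subdiff G x -> gy \in subdiff G y -> 0 <= vdot (gx - gy) (x - y).
Proof.
rewrite !inE => -[Gx_fin Gx_sub] [Gy_fin Gy_sub].
have := Gx_sub y; have := Gy_sub x.
rewrite -(fineK Gx_fin) -(fineK Gy_fin) -!EFinD !lee_fin.
rewrite vdotBl -[y - x]opprB vdotNr; lra.
Qed.

(* Compare the subgradient inequality at [x + t (y - x)] with convexity of [f + r] and the
   quadratic model of [h], then let [t -> 0]. *)
Lemma subdiff_sub_smooth {f : 'cV[R]_n -> R} {r : 'cV[R]_n -> \bar R}
    {h : 'cV[R]_n -> R} {x s d} :
  convex_fun f -> convex_efun r -> (forall y, r y != -oo%E) ->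
  (forall v, exists Q : R, forall t : R, 0 < t < 1 ->
     h (x + t *: v) <= h x + t * vdot d v + t ^+ 2 * Q) ->
  s \in subdiff (fun y => (f y)%:E + r y + (h y)%:E)%E x ->
  s - d \in subdiff (fun y => (f y)%:E + r y)%E x.
Proof.
move=> f_cvx r_cvx r_nNy h_smooth; rewrite !inE => -[Fx_fin s_sub]; split.
  by move: Fx_fin; rewrite fin_numD => /andP[].
have [rx rxE] : exists rx : R, r x = rx%:E.
  by move: Fx_fin; rewrite !fin_numD => /andP[/andP[_]]; case: (r x) => // v; exists v.
move=> y; rewrite rxE; case ryE: (r y) => [ry| |]; last by have := r_nNy y; rewrite ryE.
  2: by rewrite addey // leey.
rewrite -!EFinD lee_fin; have [Q hQ] := h_smooth (y - x).
apply: (@le_of_le_add_small _ _ _ Q) => t /andP[t_gt0 t_lt1].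
set z := t *: y + (1 - t) *: x.
have zE : z = x + t *: (y - x) by apply/matrixP => i j; rewrite !mxE; ring.
have f_z := f_cvx y x t; rewrite (ltW t_gt0) (ltW t_lt1) /= in f_z; move/(_ isT) in f_z.
have r_z := r_cvx y x t; rewrite t_gt0 t_lt1 /= ryE rxE -!EFinM -EFinD in r_z.
move/(_ isT) in r_z.
have [rz rzE] : exists rz : R, r z = rz%:E.
  by move: r_z (r_nNy z); rewrite -/z; case: (r z) => // v; exists v.
rewrite -/z rzE lee_fin in r_z.
have zBx : z - x = t *: (y - x) by rewrite zE addrC addKr.
have := s_sub z; rewrite rxE rzE -!EFinD lee_fin zBx vdotZr.
have := hQ t; rewrite t_gt0 t_lt1 -zE vdotBl => /(_ isT).
nra.
Qed.

End Subdifferential.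

Section PositivePart.
Context {R : realType} {m : nat}.
Implicit Types (u w lk ls ws : 'cV[R]_m).

Lemma ppart_ge0 u i : 0 <= ppart u i 0.
Proof. by rewrite mxE le_max lexx orbT. Qed.

Lemma vdot_ppartD_le w u :
  vdot (ppart (w + u)) (ppart (w + u)) <= vdot (ppart w) (ppart w) + 2 * vdot (ppart w) u + vdot u u.
Proof.
rewrite /vdot mulr_sumr -!big_split /=; apply: ler_sum => i _; rewrite !mxE.
set a := w i 0; set b := u i 0.
have : Num.max (a + b) 0 * Num.max (a + b) 0 <= (Num.max a 0 + b) * (Num.max a 0 + b).
  by case: (leP 0 (a + b)); case: (leP 0 a); nra.
lra.
Qed.

(* Firm nonexpansiveness of the projection onto the nonnegative orthant, in the form needed
   for the multiplier [lamI]: [ls] plays [lambda_I*] and [ws] plays [A_I x* - b_I]. *)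
Lemma ppart_update_ineq {beta : R} : 0 < beta -> forall lk ls w ws,
  (forall i, 0 <= ls i 0) -> (forall i, ws i 0 <= 0) -> vdot ls ws = 0 ->
  vdot (ppart (lk + beta *: w) - ls) (ppart (lk + beta *: w) - lk) <=
  beta * vdot (ppart (lk + beta *: w) - ls) (w - ws).
Proof.
move=> beta_gt0 lk ls w ws ls_ge0 ws_le0 compl.
have compl_i i : ls i 0 * ws i 0 = 0.
  apply/eqP; rewrite -oppr_eq0; apply/eqP.
  apply: (psumr_eq0P (P := predT) (F := fun i => - (ls i 0 * ws i 0))) => //.
    by move=> j _; rewrite oppr_ge0 mulr_ge0_le0.
  by rewrite sumrN -/(vdot ls ws) compl oppr0.
rewrite /vdot mulr_sumr; apply: ler_sum => i _; rewrite !mxE.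
have := compl_i i; have := ls_ge0 i; have := ws_le0 i.
set a := lk i 0; set l := ls i 0; set u := w i 0; set v := ws i 0 => v_le0 l_ge0 lv0.
have blv : beta * (l * v) = 0 by rewrite lv0 mulr0.
case: (leP 0 (a + beta * u)) => au; last by nra.
have pos : 0 <= (a + beta * u) * - v by apply: mulr_ge0; lra.
have := mulr_ge0 (ltW beta_gt0) pos.
nra.
Qed.

Lemma ppart_update_feas {beta : R} : 0 < beta -> forall lk w,
  beta ^+ 2 * vdot (ppart w) (ppart w) <=
  vdot (ppart (lk + beta *: w) - lk) (ppart (lk + beta *: w) - lk).
Proof.
move=> beta_gt0 lk w; rewrite /vdot mulr_sumr; apply: ler_sum => i _; rewrite !mxE.
set a := lk i 0; set u := w i 0.
have sqr_ge0' (z : R) : 0 <= z * z by rewrite -expr2 sqr_ge0.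
case: (leP 0 (a + beta * u)) => au; case: (leP 0 u) => u0;
  rewrite ?mul0r ?mulr0 ?sub0r ?mulrNN ?sqr_ge0' // ?[a + _]addrC ?addrK.
all: rewrite expr2 mulrACA ?lexx //.
have bu_ge0 := mulr_ge0 (ltW beta_gt0) u0.
by rewrite -(mulrNN a); apply: ler_pM; lra.
Qed.

Lemma ppart_update_compl (beta : R) lk w (l := ppart (lk + beta *: w)) :
  beta ^+ 2 * vdot (hadamard l w) (hadamard l w) <= vdot l l * vdot (l - lk) (l - lk).
Proof.
apply: (@le_trans _ _ (\sum_i (l i 0 * l i 0) * ((l - lk) i 0 * (l - lk) i 0))).
  rewrite /vdot mulr_sumr; apply: ler_sum => i _; rewrite /l !mxE.
  set a := lk i 0; set u := w i 0.
  by case: (leP 0 (a + beta * u)) => au; nra.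
rewrite /vdot mulr_suml; apply: ler_sum => i _.
apply: ler_wpM2l; first by rewrite -expr2 sqr_ge0.
by rewrite (bigD1 i) //= lerDl; apply: sumr_ge0 => j _; rewrite -expr2 sqr_ge0.
Qed.

End PositivePart.

Section ProxAugLagSmooth.
Context {R : realType} {n mE mI : nat}.
Variables (AE : 'M[R]_(mE, n)) (bE : 'cV[R]_mE) (AI : 'M[R]_(mI, n)) (bI : 'cV[R]_mI).
Variables (beta rho : R) (lE : 'cV[R]_mE) (lI : 'cV[R]_mI) (xk : 'cV[R]_n).
Hypothesis beta_gt0 : 0 < beta.

Definition prox_aug_lag_smooth (y : 'cV[R]_n) : R :=
  vdot lE (AE *m y - bE) + beta / 2 * vnorm (AE *m y - bE) ^+ 2
  + (2 * beta)^-1 * (vnorm (ppart (beta *: (AI *m y - bI) + lI)) ^+ 2 - vnorm lI ^+ 2)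
  + rho / 2 * vnorm (y - xk) ^+ 2.

Lemma prox_aug_lagE (G : 'cV[R]_n -> \bar R) y :
  (aug_lag AE bE AI bI G beta y lE lI + (rho / 2 * vnorm (y - xk) ^+ 2)%:E)%E
  = (G y + (prox_aug_lag_smooth y)%:E)%E.
Proof. by rewrite /aug_lag /prox_aug_lag_smooth [in RHS]EFinD addeA. Qed.

Lemma prox_aug_lag_smooth_quad y v (t : R) :
  prox_aug_lag_smooth (y + t *: v) <=
  prox_aug_lag_smooth y
  + t * vdot (AE^T *m (lE + beta *: (AE *m y - bE))
              + AI^T *m ppart (beta *: (AI *m y - bI) + lI) + rho *: (y - xk)) v
  + t ^+ 2 * (beta / 2 * vdot (AE *m v) (AE *m v) + beta / 2 * vdot (AI *m v) (AI *m v)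
              + rho / 2 * vdot v v).
Proof.
rewrite /prox_aug_lag_smooth !vnorm_sqr.
set e := AE *m y - bE; set w := beta *: (AI *m y - bI) + lI; set p := ppart w.
have mulmx_yv m (A : 'M[R]_(m, n)) : A *m (y + t *: v) = A *m y + t *: (A *m v).
  by rewrite mulmxDr scalemxAr.
have -> : AE *m (y + t *: v) - bE = e + t *: (AE *m v) by rewrite mulmx_yv /e addrAC.
have -> : beta *: (AI *m (y + t *: v) - bI) + lI = w + (t * beta) *: (AI *m v).
  by rewrite mulmx_yv /w addrAC scalerDr addrAC scalerA mulrC.
have -> : y + t *: v - xk = (y - xk) + t *: v by rewrite addrAC.
have := vdot_ppartD_le w ((t * beta) *: (AI *m v)); rewrite -/p.
rewrite ?(vdotDl, vdotDr, vdot_trmx, vdotZl, vdotZr).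
rewrite (vdotC (AE *m v) (AE *m y)) (vdotC (AE *m v) (- bE)) (vdotC v y) (vdotC v (- xk)).
set P := vdot p p; set PAv := vdot p (AI *m v); set AIv := vdot (AI *m v) (AI *m v).
have ibeta_gt0 : 0 < (2 * beta)^-1 by rewrite invr_gt0 mulr_gt0.
rewrite -(ler_pM2l ibeta_gt0).
have -> : (2 * beta)^-1 * (P + 2 * (t * beta * PAv) + t * beta * (t * beta * AIv))
   = (2 * beta)^-1 * P + t * PAv + t ^+ 2 * (beta / 2 * AIv) by field; rewrite gt_eqF.
lra.
Qed.

End ProxAugLagSmooth.

Definition pd_norm {R : realType} {n mE mI : nat} (c : R)
    (u : 'cV[R]_n) (lE : 'cV[R]_mE) (lI : 'cV[R]_mI) : R :=
  Num.sqrt (c * vnorm u ^+ 2 + (vnorm lE ^+ 2 + vnorm lI ^+ 2)).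

Section PrimalDualNorm.
Context {R : realType} {n mE mI : nat}.
Context {c : R}.
Hypothesis c_ge0 : 0 <= c.
Implicit Types (u : 'cV[R]_n) (lE : 'cV[R]_mE) (lI : 'cV[R]_mI).

Lemma pd_norm_ge0 u lE lI : 0 <= pd_norm c u lE lI.
Proof. exact: sqrtr_ge0. Qed.

Lemma pd_norm_radicand_ge0 u lE lI : 0 <= c * vnorm u ^+ 2 + (vnorm lE ^+ 2 + vnorm lI ^+ 2).
Proof. by apply: addr_ge0; [apply: mulr_ge0 | apply: addr_ge0]; rewrite ?sqr_ge0. Qed.

Lemma pd_norm_sqr u lE lI :
  pd_norm c u lE lI ^+ 2 = c * vdot u u + (vdot lE lE + vdot lI lI).
Proof.
by rewrite /pd_norm sqr_sqrtr ?pd_norm_radicand_ge0 // !vnorm_sqr.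
Qed.

Lemma le_pd_norm_sqrt u lE lI (a : R) :
  0 <= a -> a ^+ 2 <= c * vnorm u ^+ 2 + (vnorm lE ^+ 2 + vnorm lI ^+ 2) -> a <= pd_norm c u lE lI.
Proof.
move=> a_ge0 le_a; apply: le_trans (_ : a <= Num.sqrt (a ^+ 2)) _.
  by rewrite sqrtr_sqr ler_norm.
by rewrite /pd_norm ler_sqrt ?pd_norm_radicand_ge0.
Qed.

Lemma pd_norm_primal u lE lI : Num.sqrt c * vnorm u <= pd_norm c u lE lI.
Proof.
apply: le_pd_norm_sqrt; first by rewrite mulr_ge0 ?sqrtr_ge0 ?vnorm_ge0.
by rewrite exprMn sqr_sqrtr // lerDl addr_ge0 ?sqr_ge0.
Qed.

Lemma pd_norm_ineq u lE lI : vnorm lI <= pd_norm c u lE lI.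
Proof.
apply: le_pd_norm_sqrt; rewrite ?vnorm_ge0 //.
by have := mulr_ge0 c_ge0 (sqr_ge0 (vnorm u)); have := sqr_ge0 (vnorm lE); lra.
Qed.

End PrimalDualNorm.

Lemma quadratic_recursion_bound {R : realFieldType} (a D0 D1 d : R) :
  0 <= a -> 0 <= D0 -> 0 <= D1 -> 0 <= d ->
  D1 ^+ 2 + d ^+ 2 <= D0 ^+ 2 + 2 * a * D1 -> D1 <= D0 + 2 * a /\ d <= D0 + a.
Proof.
move=> a_ge0 D0_ge0 D1_ge0 d_ge0 rec; split.
  rewrite leNgt; apply/negP => D1_gt.
  have : (D0 + 2 * a) * D0 < D1 * (D1 - 2 * a).
    apply: (@le_lt_trans _ _ ((D0 + 2 * a) * (D1 - 2 * a))).
      by apply: ler_wpM2l; lra.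
    have D1_gt' : 0 < D1 - 2 * a by lra.
    by rewrite ltr_pM2r.
  have := sqr_ge0 d; have := mulr_ge0 a_ge0 D0_ge0; nra.
have : d ^+ 2 <= (D0 + a) ^+ 2 by have := sqr_ge0 (D1 - a); nra.
by rewrite ler_sqr ?nnegrE ?addr_ge0.
Qed.

Section IPALM.
Context {R : realType} {n mE mI : nat}.
Variables (beta rho e : nat -> R) (c : R).
Context {f : 'cV[R]_n -> R} {r : 'cV[R]_n -> \bar R}.
Context {AE : 'M[R]_(mE, n)} {bE : 'cV[R]_mE} {AI : 'M[R]_(mI, n)} {bI : 'cV[R]_mI}.
Context {xstar : 'cV[R]_n} {lEstar : 'cV[R]_mE} {lIstar : 'cV[R]_mI}.
Context {x : nat -> 'cV[R]_n} {lamE : nat -> 'cV[R]_mE} {lamI : nat -> 'cV[R]_mI}.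

Hypothesis f_cvx : convex_fun f.
Hypothesis r_cvx : convex_efun r.
Hypothesis r_nNy : forall y, r y != -oo%E.
Let G y := ((f y)%:E + r y)%E.

Hypothesis kkt_stat : - (AE^T *m lEstar + AI^T *m lIstar) \in subdiff G xstar.
Hypothesis kkt_eq : AE *m xstar = bE.
Hypothesis kkt_ineq : forall i, (AI *m xstar) i 0 <= bI i 0.
Hypothesis kkt_dual : forall i, 0 <= lIstar i 0.
Hypothesis kkt_compl : vdot lIstar (AI *m xstar - bI) = 0.

Hypothesis beta_gt0 : forall k, 0 < beta k.
Hypothesis c_gt0 : 0 < c.
Hypothesis beta_rho : forall k, beta k * rho k = c.
Hypothesis e_gt0 : forall k, 0 < e k.

Hypothesis inexact_step : forall k,
  (dist0 (subdiff (fun y => aug_lag AE bE AI bI G (beta k) y (lamE k) (lamI k)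
                            + ((rho k) / 2 * vnorm (y - x k) ^+ 2)%:E)%E (x k.+1))
   <= (e k)%:E)%E.
Hypothesis lamE_update : forall k, lamE k.+1 = lamE k + beta k *: (AE *m x k.+1 - bE).
Hypothesis lamI_update : forall k,
  lamI k.+1 = ppart (lamI k + beta k *: (AI *m x k.+1 - bI)).

Let Dk k := pd_norm c (x k - xstar) (lamE k - lEstar) (lamI k - lIstar).
Let Dl k := pd_norm c (x k.+1 - x k) (lamE k.+1 - lamE k) (lamI k.+1 - lamI k).
Let abar k := 6 / 5 * beta k * e k / Num.sqrt c.

Lemma ipalm_rho_gt0 k : 0 < rho k.
Proof. by have := c_gt0; rewrite -(beta_rho k) pmulr_rgt0. Qed.

(* [dist0] is an infimum, attained only up to some slack; the factor [6/5] is the slack that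
   the parameter choice of the theorem absorbs. *)
Lemma ipalm_approx_subgrad k : exists2 s : 'cV[R]_n, vnorm s <= 6 / 5 * e k &
  s - (AE^T *m lamE k.+1 + AI^T *m lamI k.+1 + rho k *: (x k.+1 - x k))
    \in subdiff G (x k.+1).
Proof.
set h := prox_aug_lag_smooth AE bE AI bI (beta k) (rho k) (lamE k) (lamI k) (x k).
have dist_lt : (dist0 (subdiff (fun y => G y + (h y)%:E) (x k.+1)) < (6 / 5 * e k)%:E)%E.
  apply: le_lt_trans (_ : _ <= (e k)%:E)%E _; last by rewrite lte_fin; have := e_gt0 k; lra.
  by have := inexact_step k; under eq_fun do rewrite prox_aug_lagE.
case/ereal_inf_lt: dist_lt => _ [s s_sub <-]; rewrite lte_fin => /ltW s_small.
exists s => //.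
have smooth v : exists Q : R, forall t : R, 0 < t < 1 ->
    h (x k.+1 + t *: v) <= h (x k.+1) + t * vdot (AE^T *m (lamE k + beta k *: (AE *m x k.+1 - bE))
                   + AI^T *m ppart (beta k *: (AI *m x k.+1 - bI) + lamI k)
                   + rho k *: (x k.+1 - x k)) v + t ^+ 2 * Q.
  by eexists => t _; apply: prox_aug_lag_smooth_quad.
have := subdiff_sub_smooth f_cvx r_cvx r_nNy smooth (mem_set s_sub).
by rewrite lamE_update lamI_update [lamI k + _]addrC.
Qed.

(* Monotonicity of [subdiff G] between [x k.+1] and [xstar], the multiplier updates and the
   three-point identity for each block. *)
Lemma ipalm_fejer {k s} :
  s - (AE^T *m lamE k.+1 + AI^T *m lamI k.+1 + rho k *: (x k.+1 - x k)) \in subdiff G (x k.+1) ->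
  Dk k.+1 ^+ 2 + Dl k ^+ 2 <= Dk k ^+ 2 + 2 * beta k * vdot s (x k.+1 - xstar).
Proof.
move=> s_sub; set v := x k.+1 - xstar.
have AEv : AE *m v = AE *m x k.+1 - bE by rewrite mulmxBr kkt_eq.
have AIv : AI *m v = (AI *m x k.+1 - bI) - (AI *m xstar - bI).
  by rewrite mulmxBr opprB addrA subrK.
have mono : 0 <= vdot s v - vdot (lamE k.+1 - lEstar) (AE *m v)
                - vdot (lamI k.+1 - lIstar) (AI *m v) - rho k * vdot (x k.+1 - x k) v.
  have := subdiff_monotone s_sub kkt_stat; rewrite -/v.
  by rewrite ?(vdotDl, vdotNl, vdotZl, vdot_trmx); congr (_ <= _); ring.
have dual_eq : vdot (lamE k.+1 - lEstar) (lamE k.+1 - lamE k)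
               = beta k * vdot (lamE k.+1 - lEstar) (AE *m v).
  have -> : lamE k.+1 - lamE k = beta k *: (AE *m v).
    by rewrite lamE_update addrAC subrr add0r AEv.
  by rewrite vdotZr.
have ineq_le0 i : (AI *m xstar - bI) i 0 <= 0.
  by have := kkt_ineq i; rewrite !mxE subr_le0.
have dual_ineq := ppart_update_ineq (beta_gt0 k) (lamI k) lIstar (AI *m x k.+1 - bI) _
  kkt_dual ineq_le0 kkt_compl.
rewrite -lamI_update -AIv in dual_ineq.
have := vdot_three_point (x k.+1) (x k) xstar.
have := vdot_three_point (lamE k.+1) (lamE k) lEstar.
have := vdot_three_point (lamI k.+1) (lamI k) lIstar.
rewrite -/v (vdotC (lamE k.+1 - lamE k)) (vdotC (lamI k.+1 - lamI k)).
rewrite /Dk /Dl !pd_norm_sqr ?(ltW c_gt0) // -(beta_rho k).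
have := mulr_ge0 (ltW (beta_gt0 k)) mono.
nra.
Qed.

Lemma ipalm_dist_step k : Dk k.+1 <= Dk k + 2 * abar k /\ Dl k <= Dk k + abar k.
Proof.
have abar_ge0 : 0 <= abar k.
  by rewrite divr_ge0 ?sqrtr_ge0 // !mulr_ge0 // ltW ?beta_gt0 ?e_gt0.
have [s s_small s_sub] := ipalm_approx_subgrad k.
apply: quadratic_recursion_bound; rewrite ?pd_norm_ge0 //.
apply: (le_trans (ipalm_fejer s_sub)); rewrite lerD2l -mulrA -(mulrA 2 (abar k)) ler_pM2l //.
have sqrtc_gt0 : 0 < Num.sqrt c by rewrite sqrtr_gt0.
have sv : beta k * vdot s (x k.+1 - xstar) <= beta k * (6 / 5 * e k * vnorm (x k.+1 - xstar)).
  rewrite ler_pM2l //; apply: (le_trans (vdot_le_vnorm _ _)).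
  by rewrite ler_wpM2r ?vnorm_ge0.
apply: (le_trans sv).
rewrite [X in X <= _](_ : _ = abar k * (Num.sqrt c * vnorm (x k.+1 - xstar))); last first.
  by rewrite /abar; field; rewrite gt_eqF.
by rewrite ler_wpM2l // pd_norm_primal // ltW.
Qed.

Lemma ipalm_dist_le k : Dk k <= Dk 0 + 2 * \sum_(i < k) abar i.
Proof.
elim: k => [|k IH]; first by rewrite big_ord0 mulr0 addr0.
by rewrite big_ord_recr /=; have [+ _] := ipalm_dist_step k; lra.
Qed.

Lemma ipalm_step_le k : Dl k <= Dk 0 + 2 * \sum_(i < k) abar i + abar k.
Proof. by have [_] := ipalm_dist_step k; have := ipalm_dist_le k; lra. Qed.

Lemma ipalm_stationarity k :
  (dist0 [set (g + AE^T *m lamE k.+1 + AI^T *m lamI k.+1)%R | g in subdiff G (x k.+1)]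
   <= (6 / 5 * e k + rho k / Num.sqrt c * Dl k)%:E)%E.
Proof.
have [s s_small s_sub] := ipalm_approx_subgrad k.
set g := s - _ in s_sub; set dx := x k.+1 - x k.
have g_res : g + AE^T *m lamE k.+1 + AI^T *m lamI k.+1 = s - rho k *: dx.
  by apply/matrixP => i j; rewrite /g !mxE; ring.
have res_in : [set (vnorm u)%:E | u in [set (g' + AE^T *m lamE k.+1 + AI^T *m lamI k.+1)%R
                 | g' in subdiff G (x k.+1)]] (vnorm (s - rho k *: dx))%:E.
  by exists (s - rho k *: dx) => //; exists g; [exact: set_mem | exact: g_res].
apply: (le_trans (ereal_inf_lbound res_in)).
rewrite lee_fin; apply: (le_trans (vnormB _ _)); rewrite vnormZ gtr0_norm ?ipalm_rho_gt0 //.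
apply: lerD => //.
have sqrtc_gt0 : 0 < Num.sqrt c by rewrite sqrtr_gt0.
rewrite -mulrA ler_pM2l ?ipalm_rho_gt0 // ler_pdivlMl //.
exact/pd_norm_primal/ltW.
Qed.

Lemma ipalm_feasibility k :
  beta k * Num.sqrt (vnorm (AE *m x k.+1 - bE) ^+ 2 + vnorm (ppart (AI *m x k.+1 - bI)) ^+ 2)
  <= Dl k.
Proof.
apply: (le_pd_norm_sqrt (ltW c_gt0)); first by rewrite mulr_ge0 ?sqrtr_ge0 ?ltW.
rewrite exprMn sqr_sqrtr ?addr_ge0 ?sqr_ge0 // !vnorm_sqr.
have -> : lamE k.+1 - lamE k = beta k *: (AE *m x k.+1 - bE).
  by rewrite lamE_update addrAC subrr add0r.
have := ppart_update_feas (beta_gt0 k) (lamI k) (AI *m x k.+1 - bI).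
rewrite -lamI_update vdotZl vdotZr.
by have := mulr_ge0 (ltW c_gt0) (vdot_ge0 (x k.+1 - x k)); lra.
Qed.

Lemma ipalm_complementarity k :
  beta k * vnorm (hadamard (lamI k.+1) (AI *m x k.+1 - bI))
  <= (Dk k.+1 + Num.sqrt (vnorm lEstar ^+ 2 + vnorm lIstar ^+ 2)) * Dl k.
Proof.
have c_ge0 := ltW c_gt0.
have compl_sqr := ppart_update_compl (beta k) (lamI k) (AI *m x k.+1 - bI).
rewrite -lamI_update in compl_sqr.
apply: (@le_trans _ _ (vnorm (lamI k.+1) * vnorm (lamI k.+1 - lamI k))).
  rewrite -ler_sqr ?nnegrE ?mulr_ge0 ?vnorm_ge0 ?(ltW (beta_gt0 k)) //.
  by rewrite !exprMn !vnorm_sqr.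
apply: ler_pM; rewrite ?vnorm_ge0 ?pd_norm_ineq //.
rewrite -[lamI k.+1](subrK lIstar); apply: (le_trans (vnormD _ _)).
apply: lerD; first exact: pd_norm_ineq.
rewrite -{1}(ger0_norm (vnorm_ge0 lIstar)) -sqrtr_sqr ler_sqrt ?addr_ge0 ?sqr_ge0 //.
by rewrite lerDr sqr_ge0.
Qed.

Lemma ipalm_residuals k :
  [/\ (dist0 [set (g + AE^T *m lamE k.+1 + AI^T *m lamI k.+1)%R | g in subdiff G (x k.+1)]
        <= (6 / 5 * e k + rho k / Num.sqrt c * Dl k)%:E)%E,
      beta k * Num.sqrt (vnorm (AE *m x k.+1 - bE) ^+ 2 + vnorm (ppart (AI *m x k.+1 - bI)) ^+ 2)
        <= Dl k,
      beta k * vnorm (hadamard (lamI k.+1) (AI *m x k.+1 - bI))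
        <= (Dk k.+1 + Num.sqrt (vnorm lEstar ^+ 2 + vnorm lIstar ^+ 2)) * Dl k,
      Dl k <= Dk 0 + 2 * \sum_(i < k) abar i + abar k &
      Dk k.+1 <= Dk 0 + 2 * (\sum_(i < k) abar i + abar k)].
Proof.
split; rewrite ?ipalm_stationarity ?ipalm_feasibility ?ipalm_complementarity ?ipalm_step_le //.
by have := ipalm_dist_le k.+1; rewrite big_ord_recr.
Qed.

End IPALM.

Lemma sqr_le_expR {R : realType} (y : R) : 0 <= y -> y ^+ 2 <= expR y.
Proof.
move=> y_ge0; have quarter := expR_ge1Dx (y / 4).
have : y <= expR (y / 4) * expR (y / 4).
  have sq : y <= (1 + y / 4) * (1 + y / 4).
    have -> : (1 + y / 4) * (1 + y / 4) = y + (1 - y / 4) ^+ 2 by rewrite expr2; field.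
    by rewrite lerDl sqr_ge0.
  by apply: (le_trans sq); apply: ler_pM; lra.
have yE : y = y / 4 + y / 4 + (y / 4 + y / 4) by field.
move=> le_y; rewrite [in leRHS]yE !expRD expr2.
by apply: ler_pM; rewrite ?addr_ge0 ?divr_ge0 //; lra.
Qed.

Section LogCeil.
Context {R : realType}.
Context {sigma : R}.
Hypothesis sigma_gt1 : 1 < sigma.

Let sigma_gt0 : 0 < sigma. Proof. exact: lt_trans ltr01 sigma_gt1. Qed.
Let ln_sigma_gt0 : 0 < ln sigma. Proof. by rewrite ln_gt0. Qed.

Lemma exprn_expR (j : nat) : sigma ^+ j = expR (j%:R * ln sigma).
Proof. by rewrite expRM_natl lnK. Qed.

Lemma ceil_log_or_le {a : R} {d : int} {j : nat} :
  ceil_log_or sigma a d <= j%:Z -> a <= sigma ^+ j.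
Proof.
rewrite /ceil_log_or; case: ifP => [a_gt0|/negbT]; last first.
  by rewrite -leNgt => a_le0 _; apply: le_trans a_le0 _; rewrite exprn_ge0 ?ltW.
rewrite ceil_le_int /logb ler_pdivrMr // => le_j.
by rewrite exprn_expR -(lnK a_gt0) ler_expR.
Qed.

(* Apply [sqr_le_expR] at [y = K ln sigma / 2], for which [sigma^K = (expR y)^2]. *)
Lemma sqr_le_expn_ceil_logb {eps : R} {K : nat} : 0 < eps ->
  Num.ceil (2 * logb sigma (8 / (eps * (ln sigma) ^+ 2))) <= K%:Z ->
  2 * K%:R ^+ 2 <= eps * sigma ^+ K.
Proof.
move=> eps_gt0; rewrite ceil_le_int /logb => le_K.
have L_gt0 := ln_sigma_gt0.
set L := ln sigma in le_K L_gt0 *; set y := K%:R * L / 2.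
have L2_gt0 : 0 < L ^+ 2 by rewrite exprn_gt0.
have b_gt0 : 0 < 8 / (eps * L ^+ 2) by rewrite divr_gt0 ?mulr_gt0.
have y_ge0 : 0 <= y by rewrite /y !mulr_ge0 ?invr_ge0 ?ler0n ?ltW.
have le_b : 8 / (eps * L ^+ 2) <= expR y.
  rewrite -(lnK b_gt0) ler_expR /y; move: le_K.
  by rewrite mulrA ler_pdivrMr // ler_pdivlMr //; lra.
have -> : sigma ^+ K = expR y * expR y.
  by rewrite exprn_expR -expRD; congr expR; rewrite /y /L; field.
have -> : 2 * K%:R ^+ 2 = y ^+ 2 * (8 / L ^+ 2) by rewrite /y; field; rewrite gt_eqF.
have le_sqr : y ^+ 2 * (8 / L ^+ 2) <= expR y * (8 / L ^+ 2).
  by rewrite ler_pM2r ?sqr_le_expR // divr_gt0.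
apply: (le_trans le_sqr).
have := le_b; rewrite -(ler_pM2r (expR_gt0 y)).
have -> : 8 / (eps * L ^+ 2) * expR y = expR y * (8 / L ^+ 2) / eps.
  by field; rewrite !gt_eqF.
by rewrite ler_pdivrMr // [eps * _]mulrC.
Qed.

End LogCeil.

Lemma K_nat_spec {R : realType} (eps beta0 rho0 sigma D0 nl : R) :
  let t4 := Num.ceil (2 * logb sigma (8 / (eps * (ln sigma) ^+ 2))) - 1 in
  exists j : nat, K_nat eps beta0 rho0 sigma D0 nl = j.+1 /\
  [/\ ceil_log_or sigma (4 * D0 * Num.sqrt rho0 / (Num.sqrt beta0 * eps)) t4 <= j%:Z,
      ceil_log_or sigma (4 * D0 / (beta0 * eps)) t4 <= j%:Z,
      ceil_log_or sigma (5 * (D0 + nl) ^+ 2 / (beta0 * eps)) t4 <= j%:Z &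
      Num.ceil (2 * logb sigma (8 / (eps * (ln sigma) ^+ 2))) <= j.+1%:Z].
Proof.
move=> t4; rewrite /K_nat; set z := K_int _ _ _ _ _ _.
have z1_ge1 : 1 <= Num.max z 1 by rewrite le_max lexx orbT.
have z_le : z <= Num.max z 1 by rewrite le_max lexx.
have absE : (absz (Num.max z 1))%:Z = Num.max z 1 by rewrite gez0_abs // (le_trans _ z1_ge1).
case jE : (absz (Num.max z 1)) => [|j] in absE *; first by move: z1_ge1; rewrite -absE.
have jE' : j.+1%:Z = j%:Z + 1 by rewrite -addn1 PoszD.
exists j; split => //; move: z_le; rewrite -absE /z /K_int -/t4 jE'.
rewrite lerD2r !ge_max => /andP[/andP[/andP[-> ->] ->] le_t4].
by split => //; rewrite -lerBlDr.
Qed.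

Section GeometricSchedule.
Context {R : realType}.
Context {eps beta0 rho0 sigma : R}.
Hypotheses (eps_gt0 : 0 < eps) (beta0_gt0 : 0 < beta0) (rho0_gt0 : 0 < rho0).
Hypothesis sigma_gt1 : 1 < sigma.

Let c := beta0 * rho0.
Let m1 := Num.min 1 (Num.sqrt c).
Let epsbar := eps * (sigma - 1) / (8 * (sigma + 1)) * m1.
Let epsbark k := Num.min epsbar (Num.sqrt (rho0 / (20 * sigma)) / sigma ^+ k).
(* [abar k] is the increment of the distance bound in step [k].  The branch [epsbar] of the
   tolerance makes [abar] grow geometrically with a small factor ([sched_dist_growth]); the
   branch [O(sigma^-k)] keeps it bounded ([sched_sum_sqr]). *)
Let abar k := 6 / 5 * (beta0 * sigma ^+ k) * epsbark k / Num.sqrt c.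

Let sigma_gt0 : 0 < sigma. Proof. exact: lt_trans ltr01 sigma_gt1. Qed.
Let sigmak_gt0 k : 0 < sigma ^+ k. Proof. exact: exprn_gt0. Qed.
Let sqrtc_gt0 : 0 < Num.sqrt c. Proof. by rewrite sqrtr_gt0 mulr_gt0. Qed.
Let m1_gt0 : 0 < m1. Proof. by rewrite lt_min ltr01. Qed.
Let m1_le1 : m1 <= 1. Proof. by rewrite ge_min lexx. Qed.

Lemma sched_beta_gt0 k : 0 < beta0 * sigma ^+ k.
Proof. exact: mulr_gt0. Qed.

Lemma sched_beta_rho k : beta0 * sigma ^+ k * (rho0 / sigma ^+ k) = beta0 * rho0.
Proof. by field; rewrite gt_eqF. Qed.

Lemma sched_epsbar_le : epsbar <= eps / 8.
Proof.
have s1 := sigma_gt1; have e0 := eps_gt0; have m0 := m1_gt0; have m1' := m1_le1.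
have ratio_le : (sigma - 1) / (8 * (sigma + 1)) <= 1 / 8 by rewrite ler_pdivrMr; lra.
have ratio_ge0 : 0 <= (sigma - 1) / (8 * (sigma + 1)) by apply: divr_ge0; lra.
rewrite /epsbar -mulrA; have : (sigma - 1) / (8 * (sigma + 1)) * m1 <= 1 / 8 by nra.
nra.
Qed.

Lemma sched_epsbar_gt0 : 0 < epsbar.
Proof.
have s1 := sigma_gt1; have e0 := eps_gt0.
by apply: mulr_gt0 => //; apply: divr_gt0; [apply: mulr_gt0|]; lra.
Qed.

Lemma sched_tol_gt0 k : 0 < epsbark k.
Proof. by rewrite lt_min sched_epsbar_gt0 divr_gt0 // sqrtr_gt0 divr_gt0 // mulr_gt0. Qed.

Lemma sched_abar_ge0 k : 0 <= abar k.
Proof. by rewrite divr_ge0 ?mulr_ge0 ?sqrtr_ge0 ?ltW ?sched_tol_gt0 ?sched_beta_gt0. Qed.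

Lemma sched_abar_geom k : abar k <= 6 / 5 * beta0 * epsbar / Num.sqrt c * sigma ^+ k.
Proof.
have -> : 6 / 5 * beta0 * epsbar / Num.sqrt c * sigma ^+ k
          = 6 / 5 * (beta0 * sigma ^+ k) * epsbar / Num.sqrt c by field; rewrite gt_eqF.
by rewrite ler_pM2r ?invr_gt0 // ler_pM2l ?mulr_gt0 ?sched_beta_gt0 // ge_min lexx.
Qed.

Lemma sched_abar_const k :
  abar k <= 6 / 5 * beta0 * Num.sqrt (rho0 / (20 * sigma)) / Num.sqrt c.
Proof.
set M := Num.sqrt _.
have -> : 6 / 5 * beta0 * M / Num.sqrt c = 6 / 5 * (beta0 * sigma ^+ k) * (M / sigma ^+ k) / Num.sqrt c.
  by field; rewrite !gt_eqF.
by rewrite ler_pM2r ?invr_gt0 // ler_pM2l ?mulr_gt0 ?sched_beta_gt0 // ge_min lexx orbT.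
Qed.

Lemma sched_dist_growth k :
  2 * \sum_(i < k) abar i + abar k <= 3 / 20 * eps * m1 * beta0 / Num.sqrt c * sigma ^+ k.
Proof.
set Cg := 6 / 5 * beta0 * epsbar / Num.sqrt c.
have s1 := sigma_gt1.
have Cg_ge0 : 0 <= Cg.
  apply/ltW/divr_gt0; last exact: sqrtc_gt0.
  by apply: mulr_gt0; [apply: mulr_gt0; [lra | exact: beta0_gt0] | exact: sched_epsbar_gt0].
have geom : \sum_(i < k) abar i <= Cg * (sigma ^+ k - 1) / (sigma - 1).
  elim: k => [|k IH]; first by rewrite big_ord0 expr0 subrr mulr0 mul0r.
  rewrite big_ord_recr /=.
  have -> : Cg * (sigma ^+ k.+1 - 1) / (sigma - 1)
            = Cg * (sigma ^+ k - 1) / (sigma - 1) + Cg * sigma ^+ k.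
    by rewrite exprS; field; rewrite subr_eq0 gt_eqF.
  by rewrite lerD // sched_abar_geom.
have -> : 3 / 20 * eps * m1 * beta0 / Num.sqrt c * sigma ^+ k
          = 2 * (Cg * (sigma ^+ k - 1) / (sigma - 1)) + Cg * sigma ^+ k + 2 * Cg / (sigma - 1).
  by rewrite /Cg /epsbar; field; rewrite ?gt_eqF //; lra.
have tail_ge0 : 0 <= 2 * Cg / (sigma - 1) by apply: divr_ge0; lra.
by have := sched_abar_geom k; rewrite -/Cg; lra.
Qed.

Lemma sched_sum_sqr k :
  (\sum_(i < k) abar i) ^+ 2 <= k%:R ^+ 2 * (9 * beta0 / (125 * sigma)).
Proof.
set B := 6 / 5 * beta0 * Num.sqrt (rho0 / (20 * sigma)) / Num.sqrt c.
have lin : \sum_(i < k) abar i <= k%:R * B.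
  elim: k => [|k IH]; first by rewrite big_ord0 mul0r.
  by rewrite big_ord_recr /= -addn1 natrD mulrDl mul1r lerD // sched_abar_const.
have -> : 9 * beta0 / (125 * sigma) = B ^+ 2.
  rewrite /B !exprMn !exprVn !sqr_sqrtr ?divr_ge0 ?mulr_ge0 ?ltW //.
  by rewrite /c; field; rewrite !gt_eqF.
rewrite -exprMn ler_sqr ?nnegrE ?sumr_ge0 // => [i _|]; first exact: sched_abar_ge0.
by rewrite (le_trans _ lin) // sumr_ge0 // => i _; exact: sched_abar_ge0.
Qed.

Let sb := Num.sqrt beta0.
Let sr := Num.sqrt rho0.
Let sb_gt0 : 0 < sb. Proof. by rewrite sqrtr_gt0. Qed.
Let sr_gt0 : 0 < sr. Proof. by rewrite sqrtr_gt0. Qed.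
Let sqrtcE : Num.sqrt c = sb * sr. Proof. by rewrite sqrtrM ?ltW. Qed.
Let beta0E : beta0 = sb ^+ 2. Proof. by rewrite sqr_sqrtr ?ltW. Qed.
Let rho0E : rho0 = sr ^+ 2. Proof. by rewrite sqr_sqrtr ?ltW. Qed.

Lemma sched_stationarity {j : nat} {D0 Dl : R} : 0 <= D0 ->
  Dl <= D0 + 2 * \sum_(i < j) abar i + abar j ->
  4 * D0 * sr / (sb * eps) <= sigma ^+ j ->
  6 / 5 * epsbark j + rho0 / sigma ^+ j / Num.sqrt c * Dl <= eps.
Proof.
move=> D0_ge0 Dl_le N_ge; rewrite -addrA in Dl_le.
have {}Dl_le := le_trans Dl_le (lerD (lexx D0) (sched_dist_growth j)).
set N := sigma ^+ j in N_ge Dl_le *; have N_gt0 : 0 < N := sigmak_gt0 j.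
have p_gt0 : 0 < rho0 / N / Num.sqrt c by rewrite !divr_gt0.
have := ler_wpM2l (ltW p_gt0) Dl_le.
have -> : rho0 / N / Num.sqrt c * (D0 + 3 / 20 * eps * m1 * beta0 / Num.sqrt c * N)
          = sr * D0 / (N * sb) + 3 / 20 * eps * m1.
  by rewrite sqrtcE beta0E rho0E; field; rewrite !gt_eqF.
have : sr * D0 / (N * sb) <= eps / 4.
  rewrite ler_pdivrMr ?mulr_gt0 //; move: N_ge; rewrite ler_pdivrMr ?mulr_gt0 //.
  by have := eps_gt0; nra.
have : 6 / 5 * epsbark j <= 6 / 5 * (eps / 8).
  by rewrite ler_pM2l // (le_trans _ sched_epsbar_le) // ge_min lexx.
by have := eps_gt0; have := m1_le1; have := m1_gt0; nra.
Qed.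

Lemma sched_feasibility {j : nat} {D0 Dl F : R} : 0 <= D0 ->
  beta0 * sigma ^+ j * F <= Dl ->
  Dl <= D0 + 2 * \sum_(i < j) abar i + abar j ->
  4 * D0 / (beta0 * eps) <= sigma ^+ j -> F <= eps.
Proof.
move=> D0_ge0 F_le Dl_le N_ge; rewrite -addrA in Dl_le.
have := le_trans F_le (le_trans Dl_le (lerD (lexx D0) (sched_dist_growth j))).
set N := sigma ^+ j in N_ge *; have N_gt0 : 0 < N := sigmak_gt0 j.
have bN_gt0 : 0 < beta0 * N by rewrite mulr_gt0.
move=> FN_le; apply: (@le_trans _ _ ((D0 + 3 / 20 * eps * m1 * beta0 / Num.sqrt c * N) / (beta0 * N))).
  by rewrite ler_pdivlMr // mulrC.
have -> : (D0 + 3 / 20 * eps * m1 * beta0 / Num.sqrt c * N) / (beta0 * N)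
          = D0 / (beta0 * N) + 3 / 20 * eps * (m1 / Num.sqrt c).
  by field; rewrite !gt_eqF.
have : D0 / (beta0 * N) <= eps / 4.
  rewrite ler_pdivrMr //; move: N_ge; rewrite ler_pdivrMr ?mulr_gt0 //.
  by have := eps_gt0; nra.
have : m1 / Num.sqrt c <= 1 by rewrite ler_pdivrMr // mul1r ge_min lexx orbT.
have : 0 <= m1 / Num.sqrt c by rewrite divr_ge0 ?ltW.
by have := eps_gt0; nra.
Qed.

(* The product of the two distances is at most [(P + 2 T)^2 <= 2 P^2 + 8 T^2]; the first term is
   controlled by the third logarithm in [K] and the second by the fourth. *)
Lemma sched_complementarity {j : nat} {D0 nl Dk Dl Y : R} :
  0 <= D0 -> 0 <= nl -> 0 <= Dk -> 0 <= Dl ->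
  Dl <= D0 + 2 * \sum_(i < j) abar i + abar j ->
  Dk <= D0 + 2 * (\sum_(i < j) abar i + abar j) ->
  beta0 * sigma ^+ j * Y <= (Dk + nl) * Dl ->
  5 * (D0 + nl) ^+ 2 / (beta0 * eps) <= sigma ^+ j ->
  2 * j.+1%:R ^+ 2 <= eps * sigma ^+ j.+1 -> Y <= eps.
Proof.
move=> D0_ge0 nl_ge0 Dk_ge0 Dl_ge0 Dl_le Dk_le Y_le N_ge K_le.
have := sched_sum_sqr j.+1; rewrite big_ord_recr /=.
set T := \sum_(i < j) abar i + abar j in Dk_le *.
have T_ge0 : 0 <= T by rewrite addr_ge0 ?sumr_ge0 // => *; exact: sched_abar_ge0.
have a_ge0 := sched_abar_ge0 j.
have {}Dl_le : Dl <= D0 + 2 * T by rewrite /T; lra.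
move=> T_sqr; set N := sigma ^+ j in Y_le N_ge.
have N_gt0 : 0 < N := sigmak_gt0 j.
set P := D0 + nl in N_ge.
have prod_le : (Dk + nl) * Dl <= 2 * P ^+ 2 + 8 * T ^+ 2.
  have : (Dk + nl) * Dl <= (P + 2 * T) * (P + 2 * T) by apply: ler_pM; rewrite /P; lra.
  by have := sqr_ge0 (P - 2 * T); nra.
have P_le : 2 * P ^+ 2 <= 2 / 5 * (beta0 * N * eps).
  by move: N_ge; rewrite ler_pdivrMr ?mulr_gt0 //; have := eps_gt0; lra.
have T_le : 8 * T ^+ 2 <= 36 / 125 * (beta0 * N * eps).
  move: K_le; rewrite [sigma ^+ j.+1]exprS -/N => K_le.
  have -> : 36 / 125 * (beta0 * N * eps) = 4 * (eps * (sigma * N)) * (9 * beta0 / (125 * sigma)).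
    by field; rewrite gt_eqF.
  have B2_ge0 : 0 <= 9 * beta0 / (125 * sigma) by rewrite divr_ge0 ?mulr_ge0 ?ltW.
  have : 0 <= (eps * (sigma * N) - 2 * j.+1%:R ^+ 2) * (9 * beta0 / (125 * sigma)).
    by apply: mulr_ge0 => //; rewrite subr_ge0.
  by lra.
have bNe_gt0 : 0 < beta0 * N * eps by rewrite !mulr_gt0.
rewrite -(ler_pM2l (mulr_gt0 beta0_gt0 N_gt0)); apply: (le_trans Y_le).
by lra.
Qed.

End GeometricSchedule.

Theorem theorem5p5 (R : realType) (n mE mI : nat)
  (f : 'cV[R]_n -> R) (gradf : 'cV[R]_n -> 'cV[R]_n) (Lf mu : R)
  (r : 'cV[R]_n -> \bar R)
  (AE : 'M[R]_(mE, n)) (bE : 'cV[R]_mE) (AI : 'M[R]_(mI, n)) (bI : 'cV[R]_mI)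
  (xstar : 'cV[R]_n) (lEstar : 'cV[R]_mE) (lIstar : 'cV[R]_mI)
  (eps beta0 rho0 sigma : R)
  (x : nat -> 'cV[R]_n) (lamE : nat -> 'cV[R]_mE) (lamI : nat -> 'cV[R]_mI) :
  convex_fun f -> has_gradient f gradf -> lipschitz_map Lf gradf ->
  0 <= mu -> strongly_convex mu f ->
  proper_fun r -> lsc_fun r -> convex_efun r ->
  let G := fun y => ((f y)%:E + r y)%E in
  0 \in [set g + AE^T *m lEstar + AI^T *m lIstar | g in subdiff G xstar] ->
  AE *m xstar = bE ->
  (forall i, (AI *m xstar) i 0 <= bI i 0) ->
  (forall i, 0 <= lIstar i 0) ->
  vdot lIstar (AI *m xstar - bI) = 0 ->
  0 < eps < 1 -> 0 < beta0 -> 0 < rho0 -> 1 < sigma ->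
  let beta := fun k : nat => beta0 * sigma ^+ k in
  let rho := fun k : nat => rho0 / sigma ^+ k in
  let epsbar := eps * (sigma - 1) / (8 * (sigma + 1)) * Num.min 1 (Num.sqrt (beta0 * rho0)) in
  let epsbark := fun k : nat =>
    Num.min epsbar (Num.sqrt (rho0 / (20 * sigma)) / sigma ^+ k) in
  G (x 0%N) \is a fin_num ->
  (forall k : nat,
     let Psi := fun y => (aug_lag AE bE AI bI G (beta k) y (lamE k) (lamI k)
                          + ((rho k) / 2 * vnorm (y - x k) ^+ 2)%:E)%E in
     (dist0 (subdiff Psi (x k.+1)) <= (epsbark k)%:E)%E) ->
  (forall k : nat, lamE k.+1 = lamE k + beta k *: (AE *m x k.+1 - bE)) ->
  (forall k : nat, lamI k.+1 = ppart (lamI k + beta k *: (AI *m x k.+1 - bI))) ->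
  let D0 := Num.sqrt (beta0 * rho0 * vnorm (x 0%N - xstar) ^+ 2
                      + (vnorm (lamE 0%N - lEstar) ^+ 2 + vnorm (lamI 0%N - lIstar) ^+ 2)) in
  let nlamstar := Num.sqrt (vnorm lEstar ^+ 2 + vnorm lIstar ^+ 2) in
  let K := K_nat eps beta0 rho0 sigma D0 nlamstar in
  (dist0 [set (g + AE^T *m lamE K + AI^T *m lamI K)%R | g in subdiff G (x K)]%R
     <= eps%:E)%E /\
  Num.sqrt (vnorm (AE *m x K - bE) ^+ 2 + vnorm (ppart (AI *m x K - bI)) ^+ 2) <= eps /\
  (forall i, 0 <= lamI K i 0) /\
  vnorm (hadamard (lamI K) (AI *m x K - bI)) <= eps.
Proof.
move=> f_cvx _ _ _ _ [r_nNy _] _ r_cvx G kkt0 kkt_eq kkt_ineq kkt_dual kkt_compl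
  /andP[eps_gt0 _] beta0_gt0 rho0_gt0 sigma_gt1 beta rho epsbar epsbark _ inexact
  lamE_update lamI_update D0 nlamstar K.
have kkt_stat : - (AE^T *m lEstar + AI^T *m lIstar) \in subdiff G xstar.
  move: kkt0; rewrite inE => -[g /mem_set g_sub /eqP].
  by rewrite -addrA addr_eq0 => /eqP <-.
have [j [KE [K_log1 K_log2 K_log3 K_log4]]] := K_nat_spec eps beta0 rho0 sigma D0 nlamstar.
rewrite /K KE.
have c_gt0 : 0 < beta0 * rho0 by rewrite mulr_gt0.
have [stat feas compl Dl_le Dk_le] := ipalm_residuals beta rho epsbark (beta0 * rho0)
  f_cvx r_cvx r_nNy kkt_stat kkt_eq kkt_ineq kkt_dual kkt_compl
  (sched_beta_gt0 beta0_gt0 sigma_gt1) c_gt0 (sched_beta_rho sigma_gt1)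
  (sched_tol_gt0 eps_gt0 beta0_gt0 rho0_gt0 sigma_gt1) inexact lamE_update lamI_update j.
have D0_ge0 : 0 <= D0 := sqrtr_ge0 _.
have nl_ge0 : 0 <= nlamstar := sqrtr_ge0 _.
split; last split; last split.
- apply: (le_trans stat); rewrite lee_fin.
  exact: (sched_stationarity eps_gt0 beta0_gt0 rho0_gt0 sigma_gt1 D0_ge0 Dl_le
           (ceil_log_or_le sigma_gt1 K_log1)).
- exact: (sched_feasibility eps_gt0 beta0_gt0 rho0_gt0 sigma_gt1 D0_ge0 feas Dl_le
           (ceil_log_or_le sigma_gt1 K_log2)).
- by move=> i; rewrite lamI_update ppart_ge0.
- exact: (sched_complementarity eps_gt0 beta0_gt0 rho0_gt0 sigma_gt1
           D0_ge0 nl_ge0 (sqrtr_ge0 _) (sqrtr_ge0 _) Dl_le Dk_le compl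
           (ceil_log_or_le sigma_gt1 K_log3) (sqr_le_expn_ceil_logb sigma_gt1 eps_gt0 K_log4)).
Qed.
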